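(* Let $N=\{1,\dots,n\}$, let $U$ be a finite set, $S_1,\dots,S_n\subseteq U$, $w:U\to\mathbb{R}$, $c\in\mathbb{R}$, and let $s:2^N\to\mathbb{R}$ be defined by $s_A=c+\mathbf{w}(\bigcup_{i\in A}S_i)$, where $\mathbf{w}(S)=\sum_{u\in S}w(u)$. Define the type-3 discrete set Fourier transform of $s$ by $\widehat{s}^{(3)}_B=\sum_{A\subseteq B}(-1)^{|A|}s_A$ for $B\subseteq N$. Then $$\widehat{s}^{(3)}_B=\begin{cases}-\mathbf{w}\big(\bigcap_{i\in B}S_i\big), & B\neq\emptyset,\\ s_\emptyset, & B=\emptyset.\end{cases}$$ *)

From mathcomp Require Import all_boot all_order all_algebra.
From mathcomp Require Import reals.
Set Implicit Arguments. Unset Strict Implicit. Unset Printing Implicit Defensive.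
Import Order.TTheory GRing.Theory Num.Theory.
Local Open Scope ring_scope.

Definition wset (R : realType) (U : finType) (w : U -> R) (S : {set U}) : R :=
  \sum_(u in S) w u.

Definition cover_fun (R : realType) (U : finType) (n : nat)
  (S : 'I_n -> {set U}) (w : U -> R) (c : R) (A : {set 'I_n}) : R :=
  c + wset w (\bigcup_(i in A) S i).

Definition dsft3 (R : realType) (n : nat) (s : {set 'I_n} -> R)
  (B : {set 'I_n}) : R :=
  \sum_(A : {set 'I_n} | A \subset B) (-1) ^+ #|A| * s A.

From mathcomp Require Import all_boot all_order all_algebra.
From mathcomp Require Import reals.
Set Implicit Arguments. Unset Strict Implicit. Unset Printing Implicit Defensive.
Import Order.TTheory GRing.Theory Num.Theory.
Local Open Scope ring_scope.

(* Writing w(\bigcup_(i in A) S_i) as \sum_u w(u) [u \in \bigcup_(i in A) S_i],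
   the transform of the union part becomes, for each u, a signed count of the
   A \subset B whose union contains u.  The A whose union avoids u are exactly
   the subsets of B_u = {i in B | u \notin S_i}, and \sum_(A \subset X) (-1)^|A|
   is [X == set0]; hence the count is [B == set0] - [B_u == set0], and
   B_u == set0 means u \in \bigcap_(i in B) S_i. *)

Section SignedSubsetSums.
Variables (R : pzRingType) (T : finType).

Definition toggle (x : T) (A : {set T}) : {set T} :=
  if x \in A then A :\ x else x |: A.

Lemma toggleK x : involutive (toggle x).
Proof.
move=> A; rewrite /toggle; case: (boolP (x \in A)) => xA.
  by rewrite setD11 setD1K.
by rewrite setU11 setU1K.
Qed.

Lemma mem_toggle x A : (x \in toggle x A) = (x \notin A).
Proof. by rewrite /toggle; case: ifP => xA; rewrite ?setD11 ?setU11. Qed.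

Lemma toggle_subset x A (B : {set T}) :
  x \in B -> (toggle x A \subset B) = (A \subset B).
Proof.
move=> xB; rewrite /toggle; case: ifP => xA; last by rewrite subUset sub1set xB.
apply/idP/idP => [sAB | /(subset_trans _)-> //]; last exact: subsetDl.
by rewrite -(setD1K xA) subUset sub1set xB.
Qed.

Lemma sign_card_toggle x A : (-1) ^+ #|toggle x A| = - (-1) ^+ #|A| :> R.
Proof.
rewrite /toggle; case: ifP => xA; last by rewrite cardsU1 xA exprS mulN1r.
by rewrite (cardsD1 x A) xA add1n exprS mulN1r opprK.
Qed.

(* The subsets of B containing x cancel against those avoiding x. *)
Lemma sum_subset_sign (B : {set T}) :
  \sum_(A : {set T} | A \subset B) (-1) ^+ #|A| = (B == set0)%:R :> R.
Proof.
have [->|[x xB]] := set_0Vmem B.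
  rewrite (eq_bigl (pred1 set0)) => [|A]; last by rewrite /= subset0.
  by rewrite big_pred1_eq cards0 eqxx.
have /negbTE -> : B != set0 by apply/set0Pn; exists x.
rewrite (bigID (fun A : {set T} => x \in A)) /=.
rewrite (reindex_inj (can_inj (toggleK x))) /=.
under eq_big => [A|A _].
- by rewrite mem_toggle toggle_subset // over.
- by rewrite sign_card_toggle over.
by rewrite sumrN addNr.
Qed.

End SignedSubsetSums.

Section CoverMembership.
Variables (I T : finType) (S : I -> {set T}).

Lemma notin_bigcup (A : {set I}) u :
  (u \notin \bigcup_(i in A) S i) = (A \subset [set i | u \notin S i]).
Proof.
apply/negP/subsetP => [uNA i iA | sub /bigcupP [i iA uSi]].
  by rewrite inE; apply/negP => uSi; apply: uNA; apply/bigcupP; exists i.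
by move: (sub i iA); rewrite inE uSi.
Qed.

Lemma setI_notin_eq0 (B : {set I}) u :
  (B :&: [set i | u \notin S i] == set0) = (u \in \bigcap_(i in B) S i).
Proof.
rewrite setI_eq0 disjoints_subset.
by apply/subsetP/bigcapP => sub i /sub; rewrite !inE negbK.
Qed.

Lemma sum_subset_sign_bigcup (R : pzRingType) (B : {set I}) u :
  \sum_(A : {set I} | A \subset B) (-1) ^+ #|A| * (u \in \bigcup_(i in A) S i)%:R
  = (B == set0)%:R - (u \in \bigcap_(i in B) S i)%:R :> R.
Proof.
have indicatorC (b : bool) : b%:R = 1 - (~~ b)%:R :> R.
  by case: b; rewrite ?subr0 ?subrr.
under [LHS]eq_bigr => A _ do rewrite indicatorC mulrBr mulr1 mulr_natr mulrb.
rewrite sumrB sum_subset_sign -big_mkcondr /= -setI_notin_eq0.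
congr (_ - _); rewrite -sum_subset_sign; apply: eq_bigl => A.
by rewrite notin_bigcup subsetI.
Qed.

End CoverMembership.

Section Dsft3.
Variables (R : realType) (n : nat).

Lemma dsft3_set0 (s : {set 'I_n} -> R) : dsft3 s set0 = s set0.
Proof.
rewrite /dsft3 (eq_bigl (pred1 set0)) => [|A]; last by rewrite /= subset0.
by rewrite big_pred1_eq cards0 mul1r.
Qed.

Lemma dsft3D (s t : {set 'I_n} -> R) (B : {set 'I_n}) :
  dsft3 (fun A => s A + t A) B = dsft3 s B + dsft3 t B.
Proof. by rewrite /dsft3 -big_split; apply: eq_bigr => A _; rewrite mulrDr. Qed.

Lemma dsft3_cst (c : R) (B : {set 'I_n}) :
  dsft3 (fun=> c) B = (B == set0)%:R * c.
Proof. by rewrite /dsft3 -mulr_suml sum_subset_sign. Qed.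

Lemma dsft3_wset_bigcup (U : finType) (S : 'I_n -> {set U}) (w : U -> R)
    (B : {set 'I_n}) :
  B != set0 ->
  dsft3 (fun A => wset w (\bigcup_(i in A) S i)) B
  = - wset w (\bigcap_(i in B) S i).
Proof.
move=> /negbTE B0; rewrite /dsft3 /wset.
have wsetE (X : {set U}) : \sum_(u in X) w u = \sum_u w u * (u \in X)%:R.
  by rewrite big_mkcond; apply: eq_bigr => u _; rewrite mulr_natr mulrb.
under [LHS]eq_bigr => A _ do rewrite wsetE mulr_sumr.
rewrite exchange_big wsetE -sumrN; apply: eq_bigr => u _.
under eq_bigr => A _ do rewrite mulrCA.
by rewrite -mulr_sumr sum_subset_sign_bigcup B0 sub0r mulrN.
Qed.

End Dsft3.

Theorem theorem2 (R : realType) (U : finType) (n : nat)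
  (S : 'I_n -> {set U}) (w : U -> R) (c : R) (B : {set 'I_n}) :
  dsft3 (cover_fun S w c) B =
  if B != set0 then - wset w (\bigcap_(i in B) S i)
  else cover_fun S w c set0.
Proof.
have [->|B0] := eqVneq B set0; first exact: dsft3_set0.
rewrite /cover_fun dsft3D dsft3_cst dsft3_wset_bigcup // (negbTE B0).
by rewrite mul0r add0r.
Qed.
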